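(* Let $M, N \in \mathbb{N}$, let $y_1,\dots,y_N \in \mathbb{R}^2$ be sample points, and let $x_0, x_1, \dots, x_M \in \mathbb{R}^2$ be the successive robot positions produced by the single-agent exploration algorithm described in the context. Define weights recursively by $n_0(y_j) = \frac{1}{N}$ for all $j$. For $i = 1,\dots,M$, let $(\pi^\star_{ij})_{j=1}^N$ be an optimal solution, and $\tilde W(i)$ the optimal value, of $$\min_{\pi_{i1},\dots,\pi_{iN}} \sum_{j=1}^N \pi_{ij}\|x_i - y_j\| \quad\text{s.t.}\quad \pi_{ij} \ge 0,\ \sum_{j=1}^N \pi_{ij} = \frac{1}{M},\ \pi_{ij} \le \min\!\left(n_{i-1}(y_j), \tfrac{1}{M}\right)\ \forall j,$$ and set $n_i(y_j) = n_{i-1}(y_j) - \pi^\star_{ij}$. For $0 \le t \le M$, let $\mu_t$ be the discrete measure that assigns mass $\frac{1}{M}$ to each of $x_1,\dots,x_t$ and an additional mass $\frac{M-t}{M}$ to $x_t$ (for $t=0$, $\mu_0$ is the unit mass at $x_0$). Let $\nu$ assign mass $\frac{1}{N}$ to each $y_j$. Let $W(t)$ be the optimal value of the transportation linear program $$\min_{\gamma \ge 0} \sum_{a,j} \gamma_{aj}\|p_a - y_j\| \quad \text{s.t.}\quad \sum_j \gamma_{aj} = \mu_t(p_a)\ \forall a,\quad \sum_a \gamma_{aj} = \frac{1}{N}\ \forall j,$$ where $p_a$ ranges over the atoms of $\mu_t$ and $\mu_t(p_a)$ is the mass of $\mu_t$ at $p_a$ (i.e. the Wasserstein-1 distance between $\mu_t$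 and $\nu$). Then for every $0 \le t \le M$, $$W(t) \le \sum_{i=1}^{t} \tilde W(i) + \sum_{j=1}^N n_t(y_j)\,\|x_t - y_j\|.$$
   Context: $\|\cdot\|$ is the Euclidean norm. Single-agent exploration algorithm: a robot starts at $x_0$ and has an energy budget of $M$ discrete time steps. At each step $t$, it picks a goal point among sample points with positive weight $n_t(y_j)$, using a receding-horizon cost. The next position $x_{t+1}$ is then whatever point an arbitrary given motion controller reaches when steering toward that goal, so $x_{t+1}$ may differ from the goal. After moving, the weights are updated by $n_{t+1}(y_j) = n_t(y_j) - \pi^\star_{(t+1)j}$, where $\pi^\star_{(t+1)j}$ solves the linear program stated in the claim. Standing assumption (Assumption 1 of the paper): at time $t$, each past robot point $x_1,\dots,x_t$ carries mass $\frac{1}{M}$. The not-yet-determined future robot points $x_{t+1},\dots,x_M$ are all regarded as located at the current position $x_t$, carrying total mass $\frac{M-t}{M}$. This is what the measure $\mu_t$ encodes. *)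

From HB Require Import structures.
From mathcomp Require Import all_boot all_order all_algebra.
From mathcomp Require Import classical_sets reals.
Set Implicit Arguments. Unset Strict Implicit. Unset Printing Implicit Defensive.
Import Order.TTheory GRing.Theory Num.Theory.
Local Open Scope ring_scope.
Local Open Scope classical_set_scope.

Section Defs.
Variable R : realType.

Definition pt2 := 'rV[R]_2.

Definition edist (p q : pt2) : R :=
  Num.sqrt (\sum_(k < 2) (p 0 k - q 0 k) ^+ 2).

Variables (M N : nat).

Definition step_cost (y : 'I_N -> pt2) (xi : pt2) (p : 'I_N -> R) : R :=
  \sum_(j < N) p j * edist xi (y j).

Definition step_feasible (nprev : 'I_N -> R) (p : 'I_N -> R) : Prop :=
  [/\ (forall j, 0 <= p j),
      \sum_(j < N) p j = 1 / M%:R &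
      (forall j, p j <= Num.min (nprev j) (1 / M%:R))].

Definition step_optimal (y : 'I_N -> pt2) (nprev : 'I_N -> R) (xi : pt2)
    (p : 'I_N -> R) : Prop :=
  step_feasible nprev p /\
  (forall q, step_feasible nprev q -> step_cost y xi p <= step_cost y xi q).

Fixpoint weight (pi : nat -> 'I_N -> R) (i : nat) (j : 'I_N) : R :=
  match i with
  | 0 => 1 / N%:R
  | i'.+1 => weight pi i' j - pi i'.+1 j
  end.

Definition atoms (x : nat -> pt2) (t : nat) : seq pt2 :=
  undup (x t :: [seq x i | i <- iota 1 t]).

Definition mass (x : nat -> pt2) (t : nat) (p : pt2) : R :=
  (count (fun i => x i == p) (iota 1 t))%:R / M%:R
  + (if p == x t then (M%:R - t%:R) / M%:R else 0).

Definition W (x : nat -> pt2) (y : 'I_N -> pt2) (t : nat) : R :=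
  let A := atoms x t in
  inf [set c | exists g : 'I_(size A) -> 'I_N -> R,
     [/\ (forall a j, 0 <= g a j),
         (forall a, \sum_(j < N) g a j = mass x t (nth 0 A a)),
         (forall j, \sum_(a < size A) g a j = 1 / N%:R) &
         c = \sum_(a < size A) \sum_(j < N) g a j * edist (nth 0 A a) (y j)]].

End Defs.

From HB Require Import structures.
From mathcomp Require Import all_boot all_order all_algebra.
From mathcomp Require Import classical_sets reals.
Import Order.TTheory GRing.Theory Num.Theory.
Local Open Scope ring_scope.

(* Consider the transport plan that moves, for every step i <= t, the mass
   pi_ij from x_i to y_j, and the remaining weight n_t(y_j) from x_t to y_j.
   Each step moves exactly 1/M and the remaining weights total (M - t)/M, so
   the plan leaves mu_t; since n_t(y_j) = 1/N - sum_i pi_ij, it delivers 1/N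
   to every y_j.  Being feasible for the transportation LP, its cost, which is
   the right-hand side, bounds W(t). *)

Lemma sum_seq_pred1_uniq (T : eqType) (V : nmodType) (s : seq T) (p : T) (c : V) :
  uniq s -> p \in s -> \sum_(q <- s) (if p == q then c else 0) = c.
Proof.
move=> us ps; rewrite (bigD1_seq p) //= eqxx big1 ?addr0 // => q.
by rewrite eq_sym => /negbTE ->.
Qed.

Lemma weight_telescope {R : realType} {N : nat} (pi : nat -> 'I_N -> R) t j :
  \sum_(1 <= i < t.+1) pi i j + weight pi t j = 1 / N%:R.
Proof.
elim: t => [|t IH]; first by rewrite big_geq // add0r.
by rewrite big_nat_recr //= -IH addrACA subrr addr0.
Qed.

Lemma W_le_plan_cost (R : realType) (M N : nat) (x : nat -> pt2 R)
    (y : 'I_N -> pt2 R) (t : nat) (g : pt2 R -> 'I_N -> R) :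
  (forall q j, 0 <= g q j) ->
  (forall q, \sum_(j < N) g q j = mass M x t q) ->
  (forall j, \sum_(q <- atoms x t) g q j = 1 / N%:R) ->
  W M x y t <= \sum_(q <- atoms x t) \sum_(j < N) g q j * edist q (y j).
Proof.
move=> g_ge0 g_rows g_cols; rewrite /W.
set A := atoms x t.
have seq_sumE (F : pt2 R -> R) : \sum_(q <- A) F q = \sum_(a < size A) F (nth 0 A a).
  by rewrite (big_nth 0) big_mkord.
apply: ge_inf.
  exists 0 => _ [h [h_ge0 _ _ ->]].
  by do 2!(apply: sumr_ge0 => ? _); rewrite mulr_ge0 ?sqrtr_ge0.
by exists (fun a j => g (nth 0 A a) j); split=> // j; rewrite -(seq_sumE (g^~ j)).
Qed.

Lemma mem_atoms_last (R : realType) (x : nat -> pt2 R) t : x t \in atoms x t.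
Proof. by rewrite mem_undup mem_head. Qed.

Lemma mem_atoms (R : realType) (x : nat -> pt2 R) t i :
  (1 <= i < t.+1)%N -> x i \in atoms x t.
Proof. by move=> it; rewrite mem_undup in_cons map_f ?orbT // mem_iota add1n. Qed.

Lemma sum_atoms_pred1 (R : realType) (V : nmodType) (x : nat -> pt2 R) t p (c : V) :
  p \in atoms x t -> \sum_(q <- atoms x t) (if p == q then c else 0) = c.
Proof. exact/sum_seq_pred1_uniq/undup_uniq. Qed.

Section GreedyPlan.
Variables (R : realType) (M N : nat).
Hypotheses (M_gt0 : (0 < M)%N) (N_gt0 : (0 < N)%N).
Variables (y : 'I_N -> pt2 R) (x : nat -> pt2 R) (pi : nat -> 'I_N -> R).
Hypothesis pi_feasible :
  forall i, (1 <= i <= M)%N -> step_feasible M (weight pi i.-1) (pi i).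

Let M_neq0 : M%:R != 0 :> R. Proof. by rewrite pnatr_eq0 -lt0n. Qed.
Let N_neq0 : N%:R != 0 :> R. Proof. by rewrite pnatr_eq0 -lt0n. Qed.

Lemma weight_ge0 i : (i <= M)%N -> forall j, 0 <= weight pi i j.
Proof.
elim: i => [|i IH] iM j /=; first by rewrite divr_ge0.
have [_ _ /(_ j)] := pi_feasible i.+1 iM.
by rewrite le_min subr_ge0 => /andP[].
Qed.

Lemma sum_weight i : (i <= M)%N -> \sum_(j < N) weight pi i j = 1 - i%:R / M%:R.
Proof.
elim: i => [|i IH] iM /=.
  by rewrite sumr_const card_ord mul0r subr0 div1r -[_ *+ N]mulr_natr mulVf.
have [_ sum_pi _] := pi_feasible i.+1 iM.
by rewrite sumrB IH ?(ltnW iM) // sum_pi -natr1 mulrDl opprD addrA.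
Qed.

Definition greedy_plan t (q : pt2 R) (j : 'I_N) : R :=
  \sum_(1 <= i < t.+1) (if x i == q then pi i j else 0)
  + (if x t == q then weight pi t j else 0).

Variable t : nat.
Hypothesis tM : (t <= M)%N.

Let step_feasible_le_t i : (1 <= i < t.+1)%N ->
  step_feasible M (weight pi i.-1) (pi i).
Proof.
by move=> /andP[i_ge1 it]; apply: pi_feasible; rewrite i_ge1 (leq_trans _ tM).
Qed.

Lemma greedy_plan_ge0 q j : 0 <= greedy_plan t q j.
Proof.
apply: addr_ge0; last by case: ifP => // _; apply: weight_ge0.
rewrite big_nat_cond; apply: sumr_ge0 => i /andP[/step_feasible_le_t [pi_ge0 _ _] _].
by case: ifP.
Qed.

Lemma sum_greedy_plan_atom q : \sum_(j < N) greedy_plan t q j = mass M x t q.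
Proof.
have count_mass : \sum_(1 <= i < t.+1) (if x i == q then 1 / M%:R else 0 : R)
    = (count (fun i => x i == q) (iota 1 t))%:R / M%:R.
  rewrite -sum1_count natr_sum mulr_suml /index_iota subSS subn0 [RHS]big_mkcond /=.
  by apply: eq_bigr => i _; case: ifP; rewrite ?mul0r.
rewrite /greedy_plan /mass big_split /= exchange_big /= -count_mass.
congr (_ + _).
  apply: eq_big_nat => i /step_feasible_le_t [_ sum_pi _].
  by case: (x i == q); rewrite ?sum_pi ?big1.
rewrite [q == x t]eq_sym; case: (x t == q); last by rewrite big1.
by rewrite sum_weight // mulrBl divff.
Qed.

Lemma sum_greedy_plan_target j : \sum_(q <- atoms x t) greedy_plan t q j = 1 / N%:R.
Proof.
rewrite big_split /= exchange_big /= sum_atoms_pred1 ?mem_atoms_last //.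
rewrite -[RHS](weight_telescope pi t j); congr (_ + _).
by apply: eq_big_nat => i it; rewrite sum_atoms_pred1 ?mem_atoms.
Qed.

Lemma greedy_plan_cost :
  \sum_(q <- atoms x t) \sum_(j < N) greedy_plan t q j * edist q (y j)
  = \sum_(1 <= i < t.+1) step_cost y (x i) (pi i)
    + \sum_(j < N) weight pi t j * edist (x t) (y j).
Proof.
(* Rewriting q as x i inside each branch makes the summands constant in q. *)
have plan_costE q j : greedy_plan t q j * edist q (y j)
    = \sum_(1 <= i < t.+1) (if x i == q then pi i j * edist (x i) (y j) else 0)
      + (if x t == q then weight pi t j * edist (x t) (y j) else 0).
  rewrite mulrDl mulr_suml; congr (_ + _).
    by apply: eq_bigr => i _; case: eqP => [->|]; rewrite ?mul0r.
  by case: eqP => [->|]; rewrite ?mul0r.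
under eq_bigr do under eq_bigr do rewrite plan_costE.
transitivity (\sum_(j < N) (\sum_(1 <= i < t.+1) pi i j * edist (x i) (y j)
                            + weight pi t j * edist (x t) (y j))).
  rewrite exchange_big; apply: eq_bigr => j _ /=.
  rewrite big_split /= exchange_big /= sum_atoms_pred1 ?mem_atoms_last //.
  congr (_ + _).
  by apply: eq_big_nat => i it; rewrite sum_atoms_pred1 ?mem_atoms.
by rewrite big_split /= exchange_big.
Qed.

Lemma W_le_step_costs :
  W M x y t <= \sum_(1 <= i < t.+1) step_cost y (x i) (pi i)
               + \sum_(j < N) weight pi t j * edist (x t) (y j).
Proof.
rewrite -greedy_plan_cost; apply: W_le_plan_cost.
- exact: greedy_plan_ge0.
- exact: sum_greedy_plan_atom.
- exact: sum_greedy_plan_target.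
Qed.

End GreedyPlan.

Theorem theorem1 (R : realType) (M N : nat) (hM : (0 < M)%N) (hN : (0 < N)%N)
    (y : 'I_N -> pt2 R) (x : nat -> pt2 R) (pi : nat -> 'I_N -> R)
    (hpi : forall i, (1 <= i <= M)%N ->
       step_optimal M y (weight pi i.-1) (x i) (pi i)) :
  forall t, (t <= M)%N ->
    W M x y t <=
      \sum_(1 <= i < t.+1) step_cost y (x i) (pi i)
      + \sum_(j < N) weight pi t j * edist (x t) (y j).
Proof.
move=> t tM; apply: W_le_step_costs => // i iM.
exact: (hpi i iM).1.
Qed.
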